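(* There is an absolute constant $c>0$ such that the following holds. Let $A=\{a_1<\dots<a_k\}$ and $A'=\{a'_1<\dots<a'_k\}$ be sets of real numbers, each with $k$ elements, having distinct pairs of consecutive differences, and let $B,B'$ be arbitrary finite nonempty sets of real numbers. Then \[ |A+B|\cdot|A'+B'|\ge c\left(k^3|B||B'|\right)^{1/2}. \] In particular, if $k=|A|=|A'|=|B|=|B'|$, then $|A+B|\cdot|A'+B'|\ge c\,k^{5/2}$.
   Context: For finite $X,Y\subset\mathbb{R}$, $X+Y=\{x+y:x\in X,y\in Y\}$. For $1\le i\le k-1$ let $d_i=a_{i+1}-a_i$ and $d'_i=a'_{i+1}-a'_i$. The sets $A$ and $A'$ have distinct pairs of consecutive differences if the ordered pairs $(d_i,d'_i)$, $1\le i\le k-1$, are pairwise distinct. *)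

From Stdlib Require Import Reals List.
Import ListNotations.
Open Scope R_scope.

(* Finite sets of reals are represented by duplicate-free lists. *)

Definition sumset (X Y : list R) : list R :=
  nodup Req_EM_T (flat_map (fun x => map (fun y => x + y) Y) X).

Definition card_sumset (X Y : list R) : nat := length (sumset X Y).

(* The k-element set {a_1 < ... < a_k}, with a_{i+1} represented by a i. *)
Definition set_of (a : nat -> R) (k : nat) : list R := map a (seq 0 k).

Definition incr_on (a : nat -> R) (k : nat) : Prop :=
  forall i : nat, (i + 1 < k)%nat -> a i < a (i + 1)%nat.

Definition cdiff (a : nat -> R) (i : nat) : R := a (i + 1)%nat - a i.

Definition distinct_diff_pairs (a a' : nat -> R) (k : nat) : Prop :=
  forall i j : nat, (i < j)%nat -> (j + 1 < k)%nat ->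
    (cdiff a i, cdiff a' i) <> (cdiff a j, cdiff a' j).

(* Write S = A + B and S' = A' + B', set q = k - 1, and rank the elements of S
   and S' in increasing order.  For b in B, b' in B' and i < q, the "gap"
   rank(a_(i+1) + b) - rank(a_i + b) is positive and the gaps along i telescope
   to at most |S|.  By Markov's inequality, with thresholds m ~ 4|S|/q and
   m' ~ 4|S'|/q, at least half of the q|B||B'| triples (b, b', i) have both gaps
   small.  Such a triple is determined by the rank of a_i + b, its gap, the rank
   of a'_i + b' and its gap: these recover a_i + b, a_(i+1) + b and their primed
   analogues, hence the pair (d_i, d'_i), hence i (the pairs are distinct), hence
   b and b'.  So q|B||B'|/2 <= |S| m |S'| m' <= 16 |S|^2 |S'|^2 / q^2, which
   gives k^3 |B||B'| <= 256 (|S||S'|)^2 and the theorem with c = 1/16. *)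

From Stdlib Require Import Reals List Lia Lra.
Open Scope R_scope.

Lemma list_sum_telescope (f : nat -> nat) (q : nat) :
  (forall i, (i < q)%nat -> (f i <= f (i + 1))%nat) ->
  (list_sum (map (fun i => f (i + 1) - f i) (seq 0 q)) + f 0 = f q)%nat.
Proof.
  induction q as [|q IH]; intros Hf; [reflexivity|].
  rewrite seq_S, map_app, list_sum_app, Nat.add_0_l; cbn [map list_sum fold_right].
  assert (Hq := Hf q (Nat.lt_succ_diag_r q)).
  assert (IHq := IH (fun i Hi => Hf i (Nat.lt_lt_succ_r i q Hi))).
  replace (q + 1)%nat with (S q) in * by lia. lia.
Qed.

Lemma list_sum_prod_le {X Y : Type} (l : list X) (l' : list Y)
    (h : X * Y -> nat) (C : nat) :
  (forall x, In x l -> (list_sum (map (fun y => h (x, y)) l') <= C)%nat) ->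
  (list_sum (map h (list_prod l l')) <= length l * C)%nat.
Proof.
  induction l as [|x l IH]; intros Hl; cbn; [lia|].
  rewrite map_app, list_sum_app, map_map.
  assert (Hx := Hl x (or_introl eq_refl)).
  assert (IHl := IH (fun y Hy => Hl y (or_intror Hy))). lia.
Qed.

Lemma length_filter_gt_le {X : Type} (g : X -> nat) (m : nat) (L : list X) :
  (S m * length (filter (fun t => m <? g t) L) <= list_sum (map g L))%nat.
Proof.
  induction L as [|t L IH]; cbn [filter map]; [cbn; lia|].
  change (list_sum (g t :: map g L)) with (g t + list_sum (map g L))%nat.
  destruct (Nat.ltb_spec m (g t)); cbn [length]; lia.
Qed.

Lemma length_filter_le_both {X : Type} (g g' : X -> nat) (m m' : nat) (L : list X) :
  (length L <= length (filter (fun t => ((g t <=? m) && (g' t <=? m'))%bool) L)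
               + length (filter (fun t => m <? g t) L)
               + length (filter (fun t => m' <? g' t) L))%nat.
Proof.
  induction L as [|t L IH]; cbn [filter length]; [lia|].
  destruct (Nat.leb_spec (g t) m), (Nat.leb_spec (g' t) m'),
    (Nat.ltb_spec m (g t)), (Nat.ltb_spec m' (g' t)); cbn [andb length]; lia.
Qed.

Lemma NoDup_list_prod {X Y : Type} (l : list X) (l' : list Y) :
  NoDup l -> NoDup l' -> NoDup (list_prod l l').
Proof.
  intros Hl Hl'. induction Hl as [|x l Hx Hl IH]; cbn; [constructor|].
  apply NoDup_app; auto.
  - apply NoDup_map_NoDup_ForallPairs; auto. intros u v _ _ E. congruence.
  - intros [u v] Hin Hin'. apply in_map_iff in Hin as [w [E _]].
    inversion E; subst. apply in_prod_iff in Hin' as [? _]. contradiction.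
Qed.

Definition rank (S : list R) (x : R) : nat :=
  length (filter (fun z => if Rlt_dec z x then true else false) S).

Lemma rank_le_length S x : (rank S x <= length S)%nat.
Proof. apply filter_length_le. Qed.

Lemma rank_le_rank S x y : x <= y -> (rank S x <= rank S y)%nat.
Proof.
  intros Hxy. unfold rank. induction S as [|z S IH]; cbn; [lia|].
  destruct (Rlt_dec z x), (Rlt_dec z y); cbn; lra || lia.
Qed.

Lemma rank_lt_rank S x y : In x S -> x < y -> (rank S x < rank S y)%nat.
Proof.
  intros Hx Hxy. unfold rank. induction S as [|z S IH]; [destruct Hx|]; cbn.
  destruct Hx as [->|Hx].
  - assert (Hle := rank_le_rank S x y (Rlt_le _ _ Hxy)). unfold rank in Hle.
    destruct (Rlt_dec x x), (Rlt_dec x y); cbn; lra || lia.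
  - specialize (IH Hx). destruct (Rlt_dec z x), (Rlt_dec z y); cbn; lra || lia.
Qed.

Lemma rank_lt_length S x : In x S -> (rank S x < length S)%nat.
Proof.
  intros Hx. unfold rank. induction S as [|z S IH]; [destruct Hx|]; cbn.
  destruct Hx as [->|Hx].
  - assert (Hle := rank_le_length S x). unfold rank in Hle.
    destruct (Rlt_dec x x); cbn; lra || lia.
  - specialize (IH Hx). destruct (Rlt_dec z x); cbn; lia.
Qed.

Lemma rank_inj S x y : In x S -> In y S -> rank S x = rank S y -> x = y.
Proof.
  intros Hx Hy E. destruct (total_order_T x y) as [[Hlt|Heq]|Hgt]; auto.
  - pose proof (rank_lt_rank S x y Hx Hlt). lia.
  - pose proof (rank_lt_rank S y x Hy Hgt). lia.
Qed.

Lemma In_sumset (a : nat -> R) (k : nat) (B : list R) (i : nat) (b : R) :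
  (i < k)%nat -> In b B -> In (a i + b) (sumset (set_of a k) B).
Proof.
  intros Hi Hb. apply nodup_In, in_flat_map. exists (a i). split.
  - apply in_map, in_seq. lia.
  - exact (in_map (fun y => a i + y) B b Hb).
Qed.

Lemma length_le_card_sumset (a : nat -> R) (k : nat) (B : list R) :
  (0 < k)%nat -> NoDup B -> (length B <= card_sumset (set_of a k) B)%nat.
Proof.
  intros Hk HB. rewrite <- (length_map (fun b => a 0%nat + b) B).
  apply NoDup_incl_length.
  - apply NoDup_map_NoDup_ForallPairs; auto. intros x y _ _ E. lra.
  - intros z Hz. apply in_map_iff in Hz as [b [<- Hb]]. now apply In_sumset.
Qed.

Section Gaps.

Variables (a : nat -> R) (k : nat) (B : list R).
Hypothesis Ha : incr_on a k.

Let S := sumset (set_of a k) B.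

Definition gap (i : nat) (b : R) : nat := rank S (a (i + 1)%nat + b) - rank S (a i + b).

Lemma rank_sumset_lt (i : nat) (b : R) :
  (i + 1 < k)%nat -> In b B -> (rank S (a i + b) < rank S (a (i + 1)%nat + b))%nat.
Proof.
  intros Hi Hb. apply rank_lt_rank.
  - apply In_sumset; [lia | exact Hb].
  - specialize (Ha i Hi). lra.
Qed.

Lemma gap_pos (i : nat) (b : R) : (i + 1 < k)%nat -> In b B -> (0 < gap i b)%nat.
Proof. intros Hi Hb. pose proof (rank_sumset_lt i b Hi Hb). unfold gap. lia. Qed.

Lemma sum_gaps_le (b : R) :
  In b B -> (list_sum (map (fun i => gap i b) (seq 0 (k - 1))) <= length S)%nat.
Proof.
  intros Hb. unfold gap.
  assert (Hmono : forall i, (i < k - 1)%nat ->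
    (rank S (a i + b) <= rank S (a (i + 1)%nat + b))%nat)
    by (intros i Hi; apply Nat.lt_le_incl, rank_sumset_lt; [lia | exact Hb]).
  pose proof (list_sum_telescope (fun i => rank S (a i + b)) (k - 1) Hmono) as Htel.
  pose proof (rank_le_length S (a (k - 1)%nat + b)).
  cbv beta in Htel. lia.
Qed.

(* A rank and a gap locate a_i + b and a_(i+1) + b inside S, hence d_i. *)
Lemma rank_gap_inj (i j : nat) (b c : R) :
  (i + 1 < k)%nat -> (j + 1 < k)%nat -> In b B -> In c B ->
  rank S (a i + b) = rank S (a j + c) -> gap i b = gap j c ->
  a i + b = a j + c /\ cdiff a i = cdiff a j.
Proof.
  intros Hi Hj Hb Hc Er Eg. unfold gap in Eg.
  pose proof (rank_sumset_lt i b Hi Hb). pose proof (rank_sumset_lt j c Hj Hc).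
  assert (E0 : a i + b = a j + c)
    by (apply (rank_inj S); auto; apply In_sumset; auto; lia).
  assert (E1 : a (i + 1)%nat + b = a (j + 1)%nat + c)
    by (apply (rank_inj S); [apply In_sumset; auto .. | lia]).
  unfold cdiff. split; lra.
Qed.

End Gaps.

Section Counting.

Variables (k : nat) (a a' : nat -> R) (B B' : list R).
Hypotheses (Ha : incr_on a k) (Ha' : incr_on a' k)
  (Hd : distinct_diff_pairs a a' k) (HB : NoDup B) (HB' : NoDup B').

Let s := card_sumset (set_of a k) B.
Let s' := card_sumset (set_of a' k) B'.
Let L := list_prod (list_prod B B') (seq 0 (k - 1)).
Let g (t : R * R * nat) : nat := gap a k B (snd t) (fst (fst t)).
Let g' (t : R * R * nat) : nat := gap a' k B' (snd t) (snd (fst t)).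

Lemma In_triples (b b' : R) (i : nat) :
  In (b, b', i) L -> (i + 1 < k)%nat /\ In b B /\ In b' B'.
Proof.
  unfold L. rewrite !in_prod_iff, in_seq. intros [[Hb Hb'] Hi]. repeat split; auto; lia.
Qed.

Lemma length_triples : length L = (length B * length B' * (k - 1))%nat.
Proof. unfold L. now rewrite !length_prod, length_seq. Qed.

Lemma sum_gap_triples_le : (list_sum (map g L) <= length B * length B' * s)%nat.
Proof.
  unfold L. rewrite <- length_prod. apply list_sum_prod_le.
  intros [b b'] Hin. apply in_prod_iff in Hin as [Hb _].
  exact (sum_gaps_le a k B Ha b Hb).
Qed.

Lemma sum_gap'_triples_le : (list_sum (map g' L) <= length B * length B' * s')%nat.
Proof.
  unfold L. rewrite <- length_prod. apply list_sum_prod_le.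
  intros [b b'] Hin. apply in_prod_iff in Hin as [_ Hb'].
  exact (sum_gaps_le a' k B' Ha' b' Hb').
Qed.

Lemma count_small_gaps_le (m m' : nat) :
  (length (filter (fun t => ((g t <=? m) && (g' t <=? m'))%bool) L)
     <= s * (m * (s' * m')))%nat.
Proof.
  set (S := sumset (set_of a k) B). set (S' := sumset (set_of a' k) B').
  set (code := fun t : R * R * nat =>
    (rank S (a (snd t) + fst (fst t)), (g t,
      (rank S' (a' (snd t) + snd (fst t)), g' t)))).
  set (codes := list_prod (seq 0 s) (list_prod (seq 1 m) (list_prod (seq 0 s') (seq 1 m')))).
  replace (s * (m * (s' * m')))%nat with (length codes)
    by (unfold codes; now rewrite !length_prod, !length_seq).
  rewrite <- (length_map code). apply NoDup_incl_length.
  - apply NoDup_map_NoDup_ForallPairs.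
    2: { apply NoDup_filter, NoDup_list_prod, seq_NoDup. now apply NoDup_list_prod. }
    intros [[b1 b1'] i] [[b2 b2'] j] H1 H2 E.
    apply filter_In in H1 as [H1 _], H2 as [H2 _].
    apply In_triples in H1 as [Hi [Hb1 Hb1']], H2 as [Hj [Hb2 Hb2']].
    unfold code, g, g' in E; cbn [fst snd] in E. injection E as Er Eg Er' Eg'.
    destruct (rank_gap_inj a k B Ha i j b1 b2 Hi Hj Hb1 Hb2 Er Eg) as [Eb Ed].
    destruct (rank_gap_inj a' k B' Ha' i j b1' b2' Hi Hj Hb1' Hb2' Er' Eg') as [Eb' Ed'].
    assert (i = j) as <-.
    { destruct (Nat.lt_total i j) as [Hlt|[Heq|Hgt]]; auto; exfalso.
      - apply (Hd i j Hlt Hj). now rewrite Ed, Ed'.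
      - apply (Hd j i Hgt Hi). now rewrite Ed, Ed'. }
    f_equal; f_equal; lra.
  - intros z Hz. apply in_map_iff in Hz as [[[b b'] i] [<- Hin]].
    apply filter_In in Hin as [Hin Hsmall].
    apply andb_prop in Hsmall as [Hm Hm']. apply Nat.leb_le in Hm, Hm'.
    apply In_triples in Hin as [Hi [Hb Hb']].
    pose proof (gap_pos a k B Ha i b Hi Hb). pose proof (gap_pos a' k B' Ha' i b' Hi Hb').
    pose proof (rank_lt_length S _ (In_sumset a k B i b ltac:(lia) Hb)).
    pose proof (rank_lt_length S' _ (In_sumset a' k B' i b' ltac:(lia) Hb')).
    unfold code, codes, g, g' in *; cbn [fst snd] in *.
    repeat (apply in_prod_iff; split); apply in_seq; unfold s, s', card_sumset; fold S S'; lia.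
Qed.

Lemma sumset_product_bound_ge2 :
  (2 <= k)%nat -> ((k - 1) ^ 3 * (length B * length B') <= 32 * (s * s') ^ 2)%nat.
Proof.
  intros Hk. set (q := (k - 1)%nat). set (P := (length B * length B')%nat).
  assert (Hq : q <> 0%nat) by lia.
  (* With m ~ 4 s / q, Markov leaves at most q |B||B'| / 4 triples with a gap above m. *)
  set (m := (4 * s / q)%nat). set (m' := (4 * s' / q)%nat).
  assert (Hm : (m * q <= 4 * s)%nat) by (rewrite Nat.mul_comm; apply Nat.Div0.mul_div_le).
  assert (Hm' : (m' * q <= 4 * s')%nat) by (rewrite Nat.mul_comm; apply Nat.Div0.mul_div_le).
  assert (Hm_gt : (4 * s < S m * q)%nat).
  { pose proof (Nat.div_mod (4 * s) q Hq). pose proof (Nat.mod_upper_bound (4 * s) q Hq). nia. }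
  assert (Hm'_gt : (4 * s' < S m' * q)%nat).
  { pose proof (Nat.div_mod (4 * s') q Hq). pose proof (Nat.mod_upper_bound (4 * s') q Hq). nia. }
  assert (Hlarge : (4 * length (filter (fun t => m <? g t) L) <= P * q)%nat).
  { pose proof (length_filter_gt_le g m L). pose proof sum_gap_triples_le. nia. }
  assert (Hlarge' : (4 * length (filter (fun t => m' <? g' t) L) <= P * q)%nat).
  { pose proof (length_filter_gt_le g' m' L). pose proof sum_gap'_triples_le. nia. }
  assert (Hsmall : (P * q <= 2 * (s * (m * (s' * m'))))%nat).
  { pose proof (length_filter_le_both g g' m m' L) as Hsplit.
    rewrite length_triples in Hsplit. pose proof (count_small_gaps_le m m'). lia. }
  assert (Hcube : (q ^ 3 * P <= 2 * s * s' * (m * q) * (m' * q))%nat).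
  { replace (q ^ 3 * P)%nat with (P * q * q * q)%nat by (cbn [Nat.pow]; ring).
    replace (2 * s * s' * (m * q) * (m' * q))%nat
      with (2 * (s * (m * (s' * m'))) * q * q)%nat by ring.
    nia. }
  assert (2 * s * s' * (m * q) * (m' * q) <= 2 * s * s' * (4 * s) * (4 * s'))%nat
    by (apply Nat.mul_le_mono; [apply Nat.mul_le_mono_l |]; assumption).
  replace (32 * (s * s') ^ 2)%nat with (2 * s * s' * (4 * s) * (4 * s'))%nat
    by (cbn [Nat.pow]; ring).
  lia.
Qed.

Lemma sumset_product_bound :
  (k ^ 3 * (length B * length B') <= (16 * (s * s')) ^ 2)%nat.
Proof.
  destruct (Nat.lt_ge_cases k 2) as [Hk|Hk].
  - destruct (Nat.eq_0_gt_0_cases k) as [E0|Hk0]; [rewrite E0; cbn; lia|].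
    replace (k ^ 3)%nat with 1%nat by (replace k with 1%nat by lia; reflexivity).
    pose proof (Nat.mul_le_mono _ _ _ _ (length_le_card_sumset a k B Hk0 HB)
      (length_le_card_sumset a' k B' Hk0 HB')).
    cbn [Nat.pow]. nia.
  - pose proof (sumset_product_bound_ge2 Hk).
    assert (Hcube : (k ^ 3 <= 8 * (k - 1) ^ 3)%nat).
    { replace (8 * (k - 1) ^ 3)%nat with ((2 * (k - 1)) ^ 3)%nat by (cbn [Nat.pow]; ring).
      apply Nat.pow_le_mono_l. lia. }
    replace ((16 * (s * s')) ^ 2)%nat with (8 * (32 * (s * s') ^ 2))%nat
      by (cbn [Nat.pow]; ring).
    pose proof (Nat.mul_le_mono_r _ _ (length B * length B') Hcube). lia.
Qed.

End Counting.

Lemma sqrt_INR_le_of_le_sqr (n p : nat) : (n <= p ^ 2)%nat -> sqrt (INR n) <= INR p.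
Proof.
  intros Hn. rewrite <- (sqrt_pow2 (INR p)) by apply pos_INR.
  apply sqrt_le_1_alt. rewrite <- pow_INR. now apply le_INR.
Qed.

Theorem theorem3 :
  exists c : R, 0 < c /\
    forall (k : nat) (a a' : nat -> R) (B B' : list R),
      incr_on a k -> incr_on a' k ->
      distinct_diff_pairs a a' k ->
      NoDup B -> NoDup B' -> B <> nil -> B' <> nil ->
      INR (card_sumset (set_of a k) B) * INR (card_sumset (set_of a' k) B')
        >= c * sqrt (INR k ^ 3 * INR (length B) * INR (length B')).
Proof.
  exists (1 / 16). split; [lra|].
  intros k a a' B B' Ha Ha' Hd HB HB' _ _.
  assert (Hbound := sqrt_INR_le_of_le_sqr _ _
    (sumset_product_bound k a a' B B' Ha Ha' Hd HB HB')).
  rewrite <- pow_INR, Rmult_assoc, <- !mult_INR, (mult_INR (card_sumset _ _)).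
  replace (INR (16 * _)) with (16 * (INR (card_sumset (set_of a k) B)
    * INR (card_sumset (set_of a' k) B'))) in Hbound
    by (rewrite !mult_INR; simpl; ring).
  lra.
Qed.
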